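(* Let $p$ be an odd prime, let $a,c$ be positive integers such that $c$ is a primitive divisor of $p^a-1$, and let $b=2^t$ with $t\ge 2$. Then $bc$ is a primitive divisor of $p^{ab}-1$ if and only if $p^a\equiv 1\pmod 4$ and $\tfrac{p^a-1}{c}$ is odd.
   Context: An integer $e$ is a primitive divisor of $p^m-1$ if $e\mid p^m-1$ and $e\nmid p^s-1$ for every $1\le s<m$. *)

From mathcomp Require Import all_boot.

Definition primitive_divisor (e p m : nat) : Prop :=
  (e %| p ^ m - 1) /\ (forall s : nat, 1 <= s -> s < m -> ~~ (e %| p ^ s - 1)).

(* Put q = p^a.  Since c is primitive, c | p^s - 1 forces a | s, so the only
   candidate exponents below a 2^t are a m with m < 2^t, and as the exponents
   of q that are 1 modulo 2^t c are closed under gcd, 2^t c is primitive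
   exactly when it does not divide q^(2^(t-1)) - 1.  The 2-adic factorisation
   q^(2^(k+1)) - 1 = (q - 1)(q + 1) 2^k r with r odd turns this into a parity
   condition on (q - 1)/c and (q + 1)/2, the latter being odd iff q = 1 mod 4. *)
From mathcomp Require Import all_boot.
From mathcomp Require Import zify.

Set Implicit Arguments.
Unset Strict Implicit.

Lemma dvdn_exp_sub1 d y m : 0 < y -> (d %| y ^ m - 1) = (y ^ m == 1 %[mod d]).
Proof. by move=> y_gt0; rewrite eqn_mod_dvd // expn_gt0 y_gt0. Qed.

Lemma expn_mod1_dvd d y m n : m %| n -> y ^ m = 1 %[mod d] -> y ^ n = 1 %[mod d].
Proof. by move=> /dvdnP[k ->] ym1; rewrite mulnC expnM -modnXm ym1 modnXm exp1n. Qed.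

Lemma expn_mod1_gcd d y m n : y ^ m = 1 %[mod d] -> y ^ n = 1 %[mod d] ->
  y ^ gcdn m n = 1 %[mod d].
Proof.
move=> ym1 yn1; have [->|m_gt0] := posnP m; first by rewrite gcd0n.
have [u _ /dvdnP[k gcd_un]] := Bezoutl n m_gt0.
have <- : y ^ (gcdn m n + u * n) = y ^ gcdn m n %[mod d].
  by rewrite expnD -modnMmr (expn_mod1_dvd (dvdn_mull u (dvdnn n))) // modnMmr muln1.
by rewrite gcd_un (expn_mod1_dvd (dvdn_mull k (dvdnn m))).
Qed.

(* Exponents below 2^(k+1) have gcd with 2^(k+1) dividing 2^k. *)
Lemma expn_mod1_pow2 d y k m : 0 < m < 2 ^ k.+1 ->
  y ^ (2 ^ k.+1) = 1 %[mod d] -> y ^ m = 1 %[mod d] -> y ^ (2 ^ k) = 1 %[mod d].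
Proof.
move=> /andP[m_gt0 m_lt] y2k1 ym1.
have [j _ gcd_pow2] := dvdn_pfactor _ _ (isT : prime 2) (dvdn_gcdr m (2 ^ k.+1)).
have j_le : j <= k.
  rewrite -ltnS -(ltn_exp2l _ _ (isT : 1 < 2)) -gcd_pow2.
  exact: leq_ltn_trans (dvdn_leq m_gt0 (dvdn_gcdl _ _)) m_lt.
apply: (expn_mod1_dvd (dvdn_exp2l 2 j_le)).
by rewrite -gcd_pow2 expn_mod1_gcd.
Qed.

Lemma sqr_sub1 x : x ^ 2 - 1 = (x - 1) * (x + 1).
Proof. by rewrite -subn_sqr. Qed.

Lemma odd_sqr_add1 y : odd y -> exists2 r, odd r & y ^ 2 + 1 = 2 * r.
Proof.
move=> odd_y; exists ((y./2 * y./2).*2.+1 + y./2.*2); first by rewrite oddD /= !odd_double.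
by rewrite -{1}(odd_double_half y) odd_y -!mul2n; lia.
Qed.

Lemma odd_exp_pow2_sub1 q k : odd q ->
  exists2 r, odd r & q ^ (2 ^ k.+1) - 1 = (q ^ 2 - 1) * 2 ^ k * r.
Proof.
move=> odd_q; elim: k => [|k [r odd_r IHk]]; first by exists 1; rewrite ?muln1.
have odd_qk : odd (q ^ (2 ^ k)) by rewrite oddX odd_q orbT.
have [s odd_s sqr_add1] := odd_sqr_add1 odd_qk.
have add1 : q ^ (2 ^ k.+1) + 1 = 2 * s by rewrite expnSr expnM sqr_add1.
exists (r * s); first by rewrite oddM odd_r.
rewrite expnS mulnC expnM sqr_sub1 add1 IHk (expnS 2 k); lia.
Qed.

Lemma odd_mod4_1 q : odd q -> q = 1 %[mod 4] <-> odd q.+1./2.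
Proof.
move=> odd_q; have := odd_double_half q; have := odd_double_half q.+1./2.
rewrite /= odd_q -!mul2n; move: q.+1./2 q./2 => h g.
by case: (odd h) => /= Eh Eq; split=> [E|//]; lia.
Qed.

Section PowerOfTwoMultiple.

Variables (q c : nat).
Hypotheses (odd_q : odd q) (c_gt0 : 0 < c) (c_dvd : c %| q - 1).

Lemma sub1_mul_add1 : q ^ 2 - 1 = c * ((q - 1) %/ c) * q.+1./2 * 2.
Proof.
have q1 : q.+1 = q.+1./2 * 2 by rewrite -{1}(odd_double_half q.+1) /= odd_q -muln2.
by rewrite sqr_sub1 addn1 {1}q1 mulnA [c * _]mulnC divnK.
Qed.

Lemma pow2_mul_dvd_exp_sub1 k : 2 ^ k.+1 * c %| q ^ (2 ^ k.+1) - 1.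
Proof.
have [r _ ->] := odd_exp_pow2_sub1 k odd_q.
rewrite sub1_mul_add1 expnS; apply/dvdnP; exists ((q - 1) %/ c * q.+1./2 * r); lia.
Qed.

Lemma pow2_mul_dvd_exp_half_sub1 k :
  (2 ^ k.+2 * c %| q ^ (2 ^ k.+1) - 1) = ~~ (odd ((q - 1) %/ c) && odd q.+1./2).
Proof.
have [r odd_r ->] := odd_exp_pow2_sub1 k odd_q.
rewrite sub1_mul_add1; set D := (q - 1) %/ c; set e := q.+1./2.
have -> : c * D * e * 2 * 2 ^ k * r = 2 ^ k.+1 * c * (D * e * r) by rewrite expnS; lia.
have -> : 2 ^ k.+2 * c = 2 ^ k.+1 * c * 2 by rewrite expnS; lia.
by rewrite dvdn_pmul2l ?muln_gt0 ?expn_gt0 // dvdn2 !oddM odd_r andbT.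
Qed.

End PowerOfTwoMultiple.

Lemma primitive_divisor_dvd_exp c p a s : 0 < p -> 0 < a ->
  primitive_divisor c p a -> c %| p ^ s - 1 -> a %| s.
Proof.
move=> p_gt0 a_gt0 [c_dvd c_prim] c_dvd_s.
rewrite !dvdn_exp_sub1 // in c_dvd c_dvd_s.
have gcd_mod1 := expn_mod1_gcd (eqP c_dvd_s) (eqP c_dvd).
suff <- : gcdn s a = a by exact: dvdn_gcdl.
apply/eqP; rewrite eqn_leq dvdn_leq ?dvdn_gcdr //=; rewrite leqNgt; apply/negP => lt_a.
have gcd_gt0 : 0 < gcdn s a by rewrite gcdn_gt0 a_gt0 orbT.
by move: (c_prim _ gcd_gt0 lt_a); rewrite dvdn_exp_sub1 // gcd_mod1 eqxx.
Qed.

Lemma primitive_divisor_pow2_mul c p a k : odd p -> 0 < a -> 0 < c ->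
  primitive_divisor c p a ->
  primitive_divisor (2 ^ k.+1 * c) p (a * 2 ^ k.+1)
  <-> ~~ (2 ^ k.+1 * c %| (p ^ a) ^ (2 ^ k) - 1).
Proof.
move=> odd_p a_gt0 c_gt0 c_prim; have [c_dvd _] := c_prim.
have p_gt0 := odd_gt0 odd_p.
have odd_q : odd (p ^ a) by rewrite oddX odd_p orbT.
split=> [[_ prim] | ndvd].
  rewrite -expnM; apply: prim; first by rewrite muln_gt0 a_gt0 expn_gt0.
  by rewrite ltn_pmul2l // ltn_exp2l.
split; first by rewrite expnM pow2_mul_dvd_exp_sub1.
move=> s s_gt0 s_lt; apply/negP => dvd_s.
have c_dvd_s : c %| p ^ s - 1 := dvdn_trans (dvdn_mull _ (dvdnn c)) dvd_s.
have /dvdnP[m def_s] := primitive_divisor_dvd_exp p_gt0 a_gt0 c_prim c_dvd_s.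
move: s_gt0 s_lt dvd_s ndvd; rewrite def_s mulnC expnM muln_gt0 ltn_pmul2l //.
move=> /andP[_ m_gt0] m_lt.
have q_gt0 : 0 < p ^ a by rewrite expn_gt0 p_gt0.
rewrite !dvdn_exp_sub1 // => /eqP qm1 /negP; apply; apply/eqP.
apply: (expn_mod1_pow2 _ _ qm1); first by rewrite m_gt0.
by apply/eqP; rewrite -dvdn_exp_sub1 // pow2_mul_dvd_exp_sub1.
Qed.

Theorem mainTheorem13 (p a c t : nat) :
  prime p -> odd p -> 0 < a -> 0 < c -> 2 <= t ->
  primitive_divisor c p a ->
  (primitive_divisor (2 ^ t * c) p (a * 2 ^ t) <->
   (p ^ a = 1 %[mod 4] /\ odd ((p ^ a - 1) %/ c))).
Proof.
move=> _ odd_p a_gt0 c_gt0; case: t => [|[|k]] // _ c_prim.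
have odd_q : odd (p ^ a) by rewrite oddX odd_p orbT.
have [c_dvd _] := c_prim.
rewrite primitive_divisor_pow2_mul //.
rewrite pow2_mul_dvd_exp_half_sub1 // negbK odd_mod4_1 //.
by rewrite andbC; split=> /andP.
Qed.
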